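(* Let $G$ be a finite two-player zero-sum extensive form game with perfect recall, and run CFR or CFR$^+$ with alternating updates (Player 1 updated first) on $G$. Let $t\ge 0$ and let $p$ be the player about to be updated at time $t$, let $\sigma^t_p$ be $p$'s current strategy, and let $\sigma_o$ be the opponent strategy used in $p$'s update values, i.e. $\sigma_o=\sigma^t_2$ if $p=1$ and $\sigma_o=\sigma^{t+1}_1$ if $p=2$. Then for every information set $I$ of player $p$ and every $a\in A(I)$, $$v^{(\sigma^{t+1}_p,\sigma_o)}(I)_a\ge v^{(\sigma^t_p,\sigma_o)}(I)_a.$$
   Context: Extensive form game: a finite tree of histories $h$ (sequences of actions from the root $\emptyset$), terminal histories $Z$, actions $A(h)$ at nonterminal $h$, an acting player $P(h)\in\{1,2,c\}$ where $c$ is chance acting with fixed probabilities, utilities $u_1(z)=-u_2(z)$ at terminals, and for each player a partition of that player's histories into information sets $I$ (all $h\in I$ share the same legal actions $A(I)$). Perfect recall: any two histories in one information set of player $p$ pass through the same sequence of player-$p$ information sets and player-$p$ actions. A strategy $\sigma_p$ gives a distribution $\boldsymbol{\sigma}_p(I)$ over $A(I)$ for each player-$p$ information set. For a profile $\boldsymbol{\sigma}$ and terminal $z$, $\pi^{\boldsymbol\sigma}_{-p}(z)$ is the product of the probabilities of all actions on the path to $z$ taken by chance and by $p$'s opponent; for $h\sqsubseteq z$, $\pi^{\boldsymbol\sigma}_p(z\mid h)$ is the product of the probabilities under $\sigma_p$ of player $p$'s actions on the path from $h$ to $z$. Counterfactual values: $v^{\boldsymbol\sigma}_p(h):=\sum_{z\in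 Z,\,h\sqsubseteq z}\pi^{\boldsymbol\sigma}_{-p}(z)\pi^{\boldsymbol\sigma}_p(z\mid h)u_p(z)$, and for an information set $I$ of player $p$ the vector $\boldsymbol{v}^{\boldsymbol\sigma}(I)$ with components $v^{\boldsymbol\sigma}(I)_a:=\sum_{h\in I}v^{\boldsymbol\sigma}_p(ha)$, $a\in A(I)$. Let $x^+=\max(x,0)$ componentwise and $\boldsymbol{\sigma}_{\mathrm{rm}}(\boldsymbol{x}):=\boldsymbol{x}^+/(\boldsymbol{1}\cdot\boldsymbol{x}^+)$ if some $x_a>0$, else $\boldsymbol{1}/|A|$. CFR with alternating updates keeps for each information set $I$ a vector $\boldsymbol{r}^t(I)$ with $\boldsymbol{r}^0(I)=\boldsymbol 0$, plays $\boldsymbol\sigma^t(I)=\boldsymbol{\sigma}_{\mathrm{rm}}(\boldsymbol{r}^t(I))$, and updates $\boldsymbol{r}^{t+1}(I)=\boldsymbol{r}^t(I)+\boldsymbol{v}^t(I)-(\boldsymbol\sigma^t(I)\cdot\boldsymbol{v}^t(I))\boldsymbol 1$; CFR$^+$ instead keeps $\boldsymbol{q}^t(I)$ with $\boldsymbol{q}^0(I)=\boldsymbol 0$, $\boldsymbol\sigma^t(I)=\boldsymbol{\sigma}_{\mathrm{rm}}(\boldsymbol{q}^t(I))$, $\boldsymbol{q}^{t+1}(I)=(\boldsymbol{q}^t(I)+\boldsymbol{v}^t(I)-(\boldsymbol\sigma^t(I)\cdot\boldsymbol{v}^t(I))\boldsymbol 1)^+$. In both, the update values are $\boldsymbol{v}^t(I)=\boldsymbol{v}^{(\sigma^t_1,\sigma^t_2)}(I)$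 if $I$ belongs to Player 1 and $\boldsymbol{v}^t(I)=\boldsymbol{v}^{(\sigma^{t+1}_1,\sigma^t_2)}(I)$ if $I$ belongs to Player 2 (so Player 1's new strategy $\sigma^{t+1}_1$ is computed first). *)

From HB Require Import structures.
From mathcomp Require Import all_boot all_order all_algebra.
Set Implicit Arguments. Unset Strict Implicit. Unset Printing Implicit Defensive.
Import Order.TTheory GRing.Theory Num.Theory.
Local Open Scope ring_scope.

Inductive plr := P1 | P2 | Chance.

Definition plr_eqb (x y : plr) : bool :=
  match x, y with
  | P1, P1 | P2, P2 | Chance, Chance => true
  | _, _ => false
  end.

(* A game is given on the set of all action sequences [seq nat]; an action at
   history h is an index a < nact h.  The actual game tree consists of the
   [valid] histories.  A valid history h is terminal iff nact h = 0.
   - player h   : acting player at a nonterminal h,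
   - chp h a    : chance probability of action a at a chance node h,
   - info h     : label of the information set containing the decision node h,
   - owner I, na I : the player owning and the number of actions of label I,
   - u1 z       : utility of player 1 at terminal z (u2 = - u1),
   - depth      : a bound on the length of histories (finiteness). *)
Record game (R : realFieldType) := Game {
  nact : seq nat -> nat;
  player : seq nat -> plr;
  chp : seq nat -> nat -> R;
  info : seq nat -> nat;
  owner : nat -> plr;
  na : nat -> nat;
  u1 : seq nat -> R;
  depth : nat }.

Section Game.
Variables (R : realFieldType) (G : game R).

Definition valid (h : seq nat) : bool :=
  all (fun k => nth 0%N h k < nact G (take k h))%N (iota 0 (size h)).

Definition decision (h : seq nat) : bool :=
  [&& valid h, (0 < nact G h)%N & ~~ plr_eqb (player G h) Chance].

Definition own_seq (p : plr) (h : seq nat) : seq (nat * nat) :=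
  [seq (info G (take k h), nth 0%N h k) | k <- iota 0 (size h) &
     plr_eqb (player G (take k h)) p].

Definition wf_game : Prop :=
  (forall h, valid h -> size h = depth G -> nact G h = 0%N) /\
  (forall h, valid h -> (0 < nact G h)%N -> player G h = Chance ->
     (forall a, (a < nact G h)%N -> 0 <= chp G h a) /\
     \sum_(a < nact G h) chp G h a = 1) /\
  (forall h, decision h ->
     owner G (info G h) = player G h /\ na G (info G h) = nact G h) /\
  (* perfect recall *)
  (forall h h', decision h -> decision h' -> info G h = info G h' ->
     own_seq (player G h) h = own_seq (player G h) h').

Definition is_infoset (I : nat) : Prop :=
  exists h, decision h /\ info G h = I.

Fixpoint hists_from (n : nat) (h : seq nat) : seq (seq nat) :=
  h :: (if n is n'.+1 then
          flatten [seq hists_from n' (rcons h a) | a <- iota 0 (nact G h)]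
        else [::]).

Definition nodes : seq (seq nat) := hists_from (depth G) [::].
Definition terminals : seq (seq nat) := [seq z <- nodes | nact G z == 0%N].

(* strategies (for a player): information-set label -> action -> probability *)
Definition strat := nat -> nat -> R.

Definition act_prob (s : strat * strat) (h : seq nat) (a : nat) : R :=
  match player G h with
  | P1 => s.1 (info G h) a
  | P2 => s.2 (info G h) a
  | Chance => chp G h a
  end.

Definition reach_opp (s : strat * strat) (p : plr) (z : seq nat) : R :=
  \prod_(k < size z | ~~ plr_eqb (player G (take k z)) p)
     act_prob s (take k z) (nth 0%N z k).

Definition reach_own_from (s : strat * strat) (p : plr) (h z : seq nat) : R :=
  \prod_(size h <= k < size z | plr_eqb (player G (take k z)) p)
     act_prob s (take k z) (nth 0%N z k).

Definition util (p : plr) (z : seq nat) : R :=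
  if p is P2 then - u1 G z else u1 G z.

Definition cfv (p : plr) (s : strat * strat) (h : seq nat) : R :=
  \sum_(z <- terminals | prefix h z)
     reach_opp s p z * reach_own_from s p h z * util p z.

Definition cfvI (s : strat * strat) (I : nat) (a : nat) : R :=
  \sum_(h <- nodes | decision h && (info G h == I))
     cfv (owner G I) s (rcons h a).

Definition rm (n : nat) (x : nat -> R) : nat -> R :=
  fun a => if [exists b : 'I_n, 0 < x b]
           then Num.max (x a) 0 / \sum_(b < n) Num.max (x b) 0
           else n%:R^-1.

Definition table := nat -> nat -> R.

Definition strat_of (r : table) : strat := fun I => rm (na G I) (r I).

(* update of the regrets (plus = false: CFR) or of q (plus = true: CFR+)
   at all information sets of player p, with update values computed
   under the profile s *)
Definition update (plus : bool) (p : plr) (r : table) (s : strat * strat)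
  : table :=
  fun I a =>
    if plr_eqb (owner G I) p then
      let v := cfvI s I in
      let base := \sum_(b < na G I) strat_of r I b * v b in
      let y := r I a + v a - base in
      if plus then Num.max y 0 else y
    else r I a.

Fixpoint cfr (plus : bool) (t : nat) : table * table :=
  match t with
  | 0%N => (fun _ _ => 0, fun _ _ => 0)
  | t'.+1 =>
      let r := cfr plus t' in
      let s1 := strat_of r.1 in
      let s2 := strat_of r.2 in
      let r1' := update plus P1 r.1 (s1, s2) in
      let r2' := update plus P2 r.2 (strat_of r1', s2) in
      (r1', r2')
  end.

Definition sigma (plus : bool) (t : nat) (p : plr) : strat :=
  strat_of (if p is P2 then (cfr plus t).2 else (cfr plus t).1).

Definition opp_strat (plus : bool) (t : nat) (p : plr) : strat :=
  if p is P2 then sigma plus t.+1 P1 else sigma plus t P2.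

Definition with_player (p : plr) (sp so : strat) : strat * strat :=
  if p is P2 then (so, sp) else (sp, so).

End Game.

(* Fix the opponent strategy.  For a strategy s of player p write V_s(L) for
   the sum, over the terminal histories z whose sequence of own (information
   set, action) pairs extends L, of the chance- and opponent-weighted utility
   of z times the probability that s plays the remaining own actions of z.
   By perfect recall each such z passes through exactly one history of the
   information set reached after L, so v^s(I)_a = V_s(L_I (I,a)) where L_I is
   p's sequence leading to I, and V_s(L) = T(L) + sum_J sum_b s(J)_b V_s(L (J,b)).
   Regret matching guarantees at every information set J that the new strategy
   does at least as well as the old one against the old counterfactual values:
   the regret-matching distribution of x + d has nonnegative d-expectation as
   soon as that of x has zero d-expectation, and the CFR+ truncation does not
   change the distribution.  Induction on the recursion, from the leaves up,
   then yields V_old(L) <= V_new(L) for every L. *)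

From mathcomp Require Import all_boot all_order all_algebra zify lra.
Set Implicit Arguments. Unset Strict Implicit. Unset Printing Implicit Defensive.
Import Order.TTheory GRing.Theory Num.Theory.
Local Open Scope ring_scope.

Lemma plr_eqbP (x y : plr) : reflect (x = y) (plr_eqb x y).
Proof. by apply: (iffP idP); case: x; case: y. Qed.

Lemma plr_eqb_refl (x : plr) : plr_eqb x x.
Proof. exact/plr_eqbP. Qed.

Section SeqFacts.
Variable T : eqType.
Implicit Types (s h z : seq T) (x : T).

Lemma take_rcons_small h x k : (k <= size h)%N -> take k (rcons h x) = take k h.
Proof. by move=> Hk; rewrite -cats1 takel_cat. Qed.

Lemma take_rcons_size h x : take (size h) (rcons h x) = h.
Proof. by rewrite take_rcons_small // take_size. Qed.

Lemma nth_rcons_small h x x0 k : (k < size h)%N -> nth x0 (rcons h x) k = nth x0 h k.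
Proof. by move=> Hk; rewrite nth_rcons Hk. Qed.

Lemma prefix_rconsE (L s : seq T) e x0 :
  prefix (rcons L e) s = [&& prefix L s, (size L < size s)%N & nth x0 s (size L) == e].
Proof.
apply/idP/and3P.
  case/prefixP=> s' ->; rewrite -cats1 -catA prefix_prefix size_cat /= nth_cat ltnn subnn.
  by split => //; lia.
case=> /prefixP[[|x s'] ->]; first by rewrite cats0 ltnn.
by rewrite nth_cat ltnn subnn => _ /eqP <-; rewrite -cat_rcons prefix_prefix.
Qed.

Lemma prefix_size_inj h1 h2 z :
  prefix h1 z -> prefix h2 z -> size h1 = size h2 -> h1 = h2.
Proof. by rewrite !prefixE => /eqP E1 /eqP E2 Hs; rewrite -E1 Hs E2. Qed.

End SeqFacts.

Lemma uniq_flatten_map (T1 T2 : eqType) (F : T1 -> seq T2) (s : seq T1) :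
  uniq s -> {in s, forall a, uniq (F a)} ->
  {in s &, forall a b x, x \in F a -> x \in F b -> a = b} ->
  uniq (flatten (map F s)).
Proof.
elim: s => //= a s IH /andP[Has Hs] HF Hd.
rewrite cat_uniq HF ?mem_head // IH //; first last.
- by move=> a' b' Ha' Hb'; apply: Hd; rewrite inE ?Ha' ?Hb' orbT.
- by move=> a' Ha'; apply: HF; rewrite inE Ha' orbT.
rewrite andbT; apply/hasPn => x /flattenP[_ /mapP[b Hb ->]] Hxb; apply/negP => Hxa.
by move: Has; rewrite (Hd a b (mem_head _ _) _ x Hxa Hxb) ?Hb // inE Hb orbT.
Qed.

Lemma sum_partition_pairs (V : nmodType) (I : eqType) (r : seq I) (P : pred I)
    (F : I -> V) (js : seq nat) (n : nat -> nat) (k : I -> nat * nat) :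
  uniq js -> {in r, forall i, P i -> (k i).1 \in js /\ ((k i).2 < n (k i).1)%N} ->
  \sum_(j <- js) \sum_(b < n j) \sum_(i <- r | P i && (k i == (j, nat_of_ord b))) F i =
  \sum_(i <- r | P i) F i.
Proof.
move=> Ujs Hk.
under eq_bigr do under eq_bigr do rewrite big_mkcondr.
under eq_bigr do rewrite exchange_big.
rewrite exchange_big big_seq_cond [RHS]big_seq_cond; apply: eq_bigr => i /andP[Hi HPi].
have [Hj Hb] := Hk i Hi HPi.
rewrite (bigD1_seq (k i).1) //= [X in _ + X]big1_seq ?addr0 => [|j /andP[Hneq _]].
  rewrite (bigD1 (Ordinal Hb)) //= -surjective_pairing eqxx big1 ?addr0 // => b Hb'.
  case: eqP => // /(congr1 snd) /= Eb; case/eqP: Hb'.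
  exact: val_inj.
by apply: big1 => b _; case: eqP => // E; rewrite E eqxx in Hneq.
Qed.

Section RegretMatching.
Variables (R : realFieldType) (n : nat).
Implicit Types (x d v : nat -> R).

Local Notation pos y := (Num.max y 0).

Lemma maxr0_ge0 (y : R) : 0 <= pos y.
Proof. by rewrite le_max lexx orbT. Qed.

Lemma maxr0_sub_mul_ge0 (x y : R) : 0 <= (pos y - pos x) * (y - x).
Proof.
have [hx|hx] := leP 0 x; have [hy|hy] := leP 0 y;
  first [by rewrite -expr2 sqr_ge0 | nra].
Qed.

Lemma rm_ge0 x a : 0 <= rm n x a.
Proof.
rewrite /rm; case: ifP => _; last by rewrite invr_ge0 ler0n.
by rewrite divr_ge0 ?maxr0_ge0 ?sumr_ge0 // => b _; apply: maxr0_ge0.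
Qed.

Lemma sum_rm x : (0 < n)%N -> \sum_(b < n) rm n x b = 1.
Proof.
move=> Hn; rewrite /rm; case: existsP => [[b Hb]|_].
  rewrite -mulr_suml divff // gt_eqF // (bigD1 b) //= ltr_pwDl ?lt_max ?Hb //.
  by rewrite sumr_ge0 // => c _; apply: maxr0_ge0.
by rewrite sumr_const card_ord -[_ *+ n]mulr_natr mulVf // pnatr_eq0 -lt0n.
Qed.

Lemma eq_rm x y : x =1 y -> rm n x =1 rm n y.
Proof.
move=> Exy a; rewrite /rm Exy.
by under eq_bigr do rewrite Exy; under eq_existsb do rewrite Exy.
Qed.

Lemma rm_maxr0 x : rm n (fun b => pos (x b)) =1 rm n x.
Proof.
move=> a; rewrite /rm -maxA maxxx.
under eq_bigr do rewrite -maxA maxxx.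
by under eq_existsb do rewrite lt_max ltxx orbF.
Qed.

Lemma maxr0_rm x (b : 'I_n) : pos (x b) = (\sum_(c < n) pos (x c)) * rm n x b.
Proof.
rewrite /rm; case: existsP => [[c Hc]|Hx].
  rewrite mulrC divfK // gt_eqF // (bigD1 c) //= ltr_pwDl ?lt_max ?Hc //.
  by rewrite sumr_ge0 // => i _; apply: maxr0_ge0.
have x_le0 (c : 'I_n) : pos (x c) = 0.
  by rewrite max_r // leNgt; apply/negP => ?; apply: Hx; exists c.
by rewrite x_le0 big1 ?mul0r.
Qed.

Lemma sum_rm_shift_ge0 x d : \sum_(b < n) rm n x b * d b = 0 ->
  0 <= \sum_(b < n) rm n (fun a => x a + d a) b * d b.
Proof.
(* With X, Y the positive parts of x and y = x + d: the hypothesis gives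
   sum X d = 0, and Y - X has the sign of d. *)
move=> Hx0; set y := fun a => x a + d a.
have sum_pos_mul (z : nat -> R) : \sum_(b < n) pos (z b) * d b =
                     (\sum_(c < n) pos (z c)) * \sum_(b < n) rm n z b * d b.
  by rewrite mulr_sumr; apply: eq_bigr => b _; rewrite mulrA -maxr0_rm.
have Xd0 : \sum_(b < n) pos (x b) * d b = 0 by rewrite sum_pos_mul Hx0 mulr0.
have Yd_ge0 : 0 <= \sum_(b < n) pos (y b) * d b.
  rewrite -[X in X <= _]Xd0; apply: ler_sum => b _; rewrite -subr_ge0 -mulrBl.
  by have := maxr0_sub_mul_ge0 (x b) (y b); rewrite /y addrAC subrr add0r.
case: (boolP [exists b : 'I_n, 0 < y b]) => [/existsP[b Hb]|Hy].
  have Ypos : 0 < \sum_(c < n) pos (y c).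
    rewrite (bigD1 b) //= ltr_pwDl ?lt_max ?Hb //.
    by rewrite sumr_ge0 // => i _; apply: maxr0_ge0.
  by rewrite -(pmulr_rge0 _ Ypos) -sum_pos_mul.
have y_le0 (b : 'I_n) : y b <= 0.
  by rewrite leNgt; apply/negP => Hb; case/existsP: Hy; exists b.
suff Hx : ~~ [exists b : 'I_n, 0 < x b].
  rewrite (eq_bigr (fun b : 'I_n => rm n x b * d b)) ?Hx0 // => b _.
  by rewrite /rm (negbTE Hy) (negbTE Hx).
apply/existsP => -[b Hb].
have : \sum_(c < n) pos (x c) * y c <= 0.
  by apply: sumr_le0 => c _; rewrite mulr_ge0_le0 ?maxr0_ge0.
apply/negP; rewrite -ltNge.
under eq_bigr do rewrite /y mulrDr.
rewrite big_split /= Xd0 addr0 (bigD1 b) //= ltr_pwDl ?(max_l (ltW Hb)) ?mulr_gt0 //.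
by apply: sumr_ge0 => c _; have [hc|hc] := leP 0 (x c); rewrite ?mul0r ?mulr_ge0.
Qed.

Lemma rm_update_ge (plus : bool) x v base :
  base = \sum_(b < n) rm n x b * v b ->
  base <= \sum_(b < n) rm n (fun a => if plus then pos (x a + v a - base)
                                     else x a + v a - base) b * v b.
Proof.
move=> Ebase; case: (posnP n) => [n0|n_gt0].
  by rewrite Ebase n0 !big_ord0.
have Erm : rm n (fun a => if plus then pos (x a + v a - base) else x a + v a - base) =1
           rm n (fun a => x a + (v a - base)).
  have Ey : (fun a => x a + v a - base) =1 (fun a => x a + (v a - base)).
    by move=> a; rewrite addrA.
  by case: plus => a; rewrite ?(rm_maxr0 (fun a => x a + v a - base)) (eq_rm Ey).
under eq_bigr do rewrite Erm.
rewrite -subr_ge0.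
have sum_shift (z : nat -> R) : \sum_(b < n) rm n z b * (v b - base) =
                   \sum_(b < n) rm n z b * v b - base.
  by under eq_bigr do rewrite mulrBr; rewrite sumrB -mulr_suml sum_rm // mul1r.
rewrite -sum_shift; apply: sum_rm_shift_ge0.
by rewrite sum_shift Ebase subrr.
Qed.

End RegretMatching.

Section GameTree.
Variables (R : realFieldType) (G : game R).

Lemma validP h :
  reflect (forall k, (k < size h)%N -> (nth 0%N h k < nact G (take k h))%N) (valid G h).
Proof.
apply: (iffP allP) => H k; first by move=> Hk; apply: H; rewrite mem_iota.
by rewrite mem_iota => /andP[_ /H].
Qed.

Lemma valid_take z k : valid G z -> valid G (take k z).
Proof.
move=> /validP Hv; apply/validP => j; rewrite size_take_min => Hj.
by rewrite nth_take ?take_takel ?Hv //; lia.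
Qed.

Lemma valid_prefix_rcons h x z : valid G z -> prefix (rcons h x) z -> (x < nact G h)%N.
Proof.
rewrite (prefix_rconsE _ _ _ 0%N) => /validP Hv /and3P[Hhz Hlt /eqP <-].
by move: Hhz; rewrite prefixE => /eqP {2}<-; apply: Hv.
Qed.

Lemma decision_take z k : valid G z -> (k < size z)%N ->
  player G (take k z) <> Chance -> decision G (take k z).
Proof.
move=> Hv Hk Hc; rewrite /decision valid_take //=.
rewrite (leq_ltn_trans _ (validP _ Hv k Hk)) //.
by case: (player G _) Hc.
Qed.

Lemma wf_decision_info : wf_game G -> forall h, decision G h ->
  owner G (info G h) = player G h /\ na G (info G h) = nact G h.
Proof. by case=> _ [_ []]. Qed.

Lemma mem_hists_from n h0 x : x \in hists_from G n h0 <->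
  exists s, [/\ x = h0 ++ s, (size s <= n)%N &
    forall k, (k < size s)%N -> (nth 0%N s k < nact G (h0 ++ take k s))%N].
Proof.
elim: n h0 x => [|n IH] h0 x /=; rewrite inE.
  split=> [/eqP->|[s [-> Hs _]]]; first by exists [::]; rewrite cats0.
  by move: Hs; rewrite leqn0 => /nilP->; rewrite cats0.
split.
  case/orP=> [/eqP->|]; first by exists [::]; rewrite cats0.
  case/flattenP=> _ /mapP[a Ha ->] /IH[s [-> Hs Hk]].
  exists (a :: s); split; rewrite ?cat_rcons //.
  case=> [|k] /=; first by rewrite cats0; move: Ha; rewrite mem_iota.
  by rewrite ltnS -cat_rcons => /Hk.
case=> [[|a s]] [-> Hs Hk]; first by rewrite cats0 eqxx.
apply/orP; right; apply/flattenP; exists (hists_from G n (rcons h0 a)).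
  by apply/mapP; exists a => //; rewrite mem_iota /=; have := Hk 0%N isT; rewrite cats0.
apply/IH; exists s; split; rewrite ?cat_rcons // => k Hk'.
by have := Hk k.+1 Hk'; rewrite /= cat_rcons.
Qed.

Lemma mem_nodes x : x \in nodes G <-> valid G x /\ (size x <= depth G)%N.
Proof.
rewrite mem_hists_from; split=> [[s [-> Hs Hk]]|[/validP Hv Hs]].
  by split => //; apply/validP.
by exists x.
Qed.

Lemma uniq_hists_from n h0 : uniq (hists_from G n h0).
Proof.
elim: n h0 => [|n IH] h0 //=; apply/andP; split.
  apply/negP => /flattenP[_ /mapP[a _ ->]] /mem_hists_from[s [E _ _]].
  by have := congr1 size E; rewrite size_cat size_rcons; lia.
apply: uniq_flatten_map => [||a b _ _ x]; rewrite ?iota_uniq //.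
move=> /mem_hists_from[s [-> _ _]] /mem_hists_from[s' [/(congr1 (nth 0%N ^~ (size h0)))]].
by rewrite !nth_cat !size_rcons ltnSn !nth_rcons ltnn eqxx.
Qed.

Lemma uniq_nodes : uniq (nodes G).
Proof. exact: uniq_hists_from. Qed.

Lemma mem_terminals z : z \in terminals G -> valid G z /\ (size z <= depth G)%N.
Proof. by rewrite mem_filter => /andP[_ /mem_nodes]. Qed.

End GameTree.

Section OwnSequences.
Variables (R : realFieldType) (G : game R) (p : plr).
Local Notation own := (own_seq G p).

Lemma own_seq_rcons h x : own (rcons h x) =
  own h ++ (if plr_eqb (player G h) p then [:: (info G h, x)] else [::]).
Proof.
rewrite /own_seq size_rcons -addn1 iotaD add0n filter_cat map_cat /=.
congr (_ ++ _).
  rewrite (@eq_in_filter _ _ (fun k => plr_eqb (player G (take k h)) p)); last first.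
    by move=> k; rewrite mem_iota => /andP[_ Hk]; rewrite take_rcons_small // ltnW.
  apply/eq_in_map => k; rewrite mem_filter mem_iota.
  case/andP=> _ /andP[_ Hk].
  by rewrite take_rcons_small ?nth_rcons_small // ltnW.
rewrite take_rcons_size; case: plr_eqb => //=.
by rewrite take_rcons_size nth_rcons ltnn eqxx.
Qed.

Lemma size_own_seq z : (size (own z) <= size z)%N.
Proof. by rewrite size_map size_filter (leq_trans (count_size _ _)) ?size_iota. Qed.

Lemma own_seq_prefix h z : prefix h z -> prefix (own h) (own z).
Proof.
case/prefixP=> s ->; elim/last_ind: s => [|s x IH]; first by rewrite cats0 prefix_refl.
by rewrite -rcons_cat own_seq_rcons prefix_catl.
Qed.

Lemma own_seq_nth z i : (i < size (own z))%N ->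
  exists k, [/\ (k < size z)%N, player G (take k z) = p,
     own (take k z) = take i (own z) &
     nth (0%N, 0%N) (own z) i = (info G (take k z), nth 0%N z k)].
Proof.
elim/last_ind: z i => [|z x IH] i //; rewrite own_seq_rcons size_cat => Hi.
case: (ltnP i (size (own z))) => Hiz.
  have [k [Hk Hp Ho Hn]] := IH i Hiz.
  have Hkz : (k <= size z)%N := ltnW Hk.
  exists k; split; rewrite ?take_rcons_small ?nth_rcons_small //.
  - by rewrite size_rcons ltnS.
  - by rewrite takel_cat // ltnW.
  - by rewrite nth_cat Hiz.
move: Hi; case: plr_eqbP => Hp /= Hi; last by lia.
have -> : i = size (own z) by lia.
exists (size z); rewrite size_rcons take_rcons_size nth_rcons ltnn eqxx.
by rewrite take_size_cat // nth_cat ltnn subnn.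
Qed.

Lemma size_own_seq_lt h1 h2 z : prefix h1 z -> prefix h2 z ->
  (size h1 < size h2)%N -> player G h1 = p -> (size (own h1) < size (own h2))%N.
Proof.
rewrite !prefixE => /eqP E1 /eqP E2 Hs Hp.
have Hz : (size h1 < size z)%N by move: Hs; rewrite -E2 size_take_min; lia.
have : prefix (rcons h1 (nth 0%N z (size h1))) h2.
  have -> : rcons h1 (nth 0%N z (size h1)) = take (size h1).+1 z.
    by rewrite (take_nth 0%N Hz) E1.
  by rewrite -E2 prefixE size_takel // take_takel.
move/own_seq_prefix; rewrite own_seq_rcons Hp plr_eqb_refl.
by move/size_prefix; rewrite size_cat /= addn1.
Qed.

Lemma prefix_own_seq_inj h1 h2 z : prefix h1 z -> prefix h2 z ->
  player G h1 = p -> player G h2 = p -> own h1 = own h2 -> h1 = h2.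
Proof.
move=> H1 H2 P1 P2 Eo; apply: (prefix_size_inj H1 H2).
case: (ltngtP (size h1) (size h2)) => // Hs.
- by have := size_own_seq_lt H1 H2 Hs P1; rewrite Eo ltnn.
- by have := size_own_seq_lt H2 H1 Hs P2; rewrite Eo ltnn.
Qed.

End OwnSequences.

Section ReachProbabilities.
Variables (R : realFieldType) (G : game R) (p : plr) (Hp : p <> Chance).

Lemma act_prob_with_player sp so h a : player G h = p ->
  act_prob G (with_player p sp so) h a = sp (info G h) a.
Proof. by move=> Hh; rewrite /act_prob Hh; case: p Hp {Hh}. Qed.

Lemma reach_opp_with_player sp sp' so z :
  reach_opp G (with_player p sp so) p z = reach_opp G (with_player p sp' so) p z.
Proof.
apply: eq_bigr => k; rewrite /act_prob; move: (info G _) (nth 0%N z k).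
by case: (player G (take k z)); case: p Hp.
Qed.

Lemma reach_own_from_rcons s h z x : (size h <= size z)%N ->
  reach_own_from G s p h (rcons z x) = reach_own_from G s p h z *
    (if plr_eqb (player G z) p then act_prob G s z x else 1).
Proof.
move=> Hs; rewrite /reach_own_from size_rcons big_mkcond big_nat_recr //=.
rewrite [in RHS]big_mkcond.
rewrite take_rcons_size nth_rcons ltnn eqxx; congr (_ * _).
apply: eq_big_nat => k /andP[_ Hk].
by rewrite take_rcons_small ?nth_rcons_small // ltnW.
Qed.

Lemma reach_own_from_own_seq sp so h z : prefix h z ->
  reach_own_from G (with_player p sp so) p h z =
  \prod_(e <- drop (size (own_seq G p h)) (own_seq G p z)) sp e.1 e.2.
Proof.
case/prefixP=> s ->; elim/last_ind: s => [|s x IH].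
  by rewrite cats0 drop_size big_nil /reach_own_from big_geq.
rewrite -rcons_cat reach_own_from_rcons ?size_cat ?leq_addr // IH own_seq_rcons.
have /prefixP[D ->] := own_seq_prefix G p (prefix_prefix h s).
rewrite -catA !drop_size_cat // big_cat /=.
by case: plr_eqbP => Hpl; rewrite ?big_nil // big_seq1 act_prob_with_player.
Qed.

End ReachProbabilities.

Section SequenceFormValue.
Variables (R : realFieldType) (G : game R) (p : plr) (so : strat R).
Hypotheses (Hwf : wf_game G) (Hp : p <> Chance).
Local Notation own := (own_seq G p).

(* [reach_opp] does not depend on p's own strategy (reach_opp_with_player);
   the zero strategy is a placeholder. *)
Definition seq_weight z :=
  reach_opp G (with_player p (fun _ _ => 0) so) p z * util G p z.

Definition seq_value (sp : strat R) (L : seq (nat * nat)) : R :=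
  \sum_(z <- terminals G | prefix L (own z))
     seq_weight z * \prod_(e <- drop (size L) (own z)) sp e.1 e.2.

Definition next_infosets (L : seq (nat * nat)) : seq nat :=
  undup [seq info G h | h <- nodes G &
           [&& decision G h, plr_eqb (player G h) p & own h == L]].

Lemma next_infosetsP L J : J \in next_infosets L ->
  exists h, [/\ decision G h, player G h = p, own h = L & info G h = J].
Proof.
rewrite mem_undup => /mapP[h]; rewrite mem_filter => /andP[/and3P[Hd /plr_eqbP Ph /eqP Oh] _] ->.
by exists h.
Qed.

Lemma infoset_own_seq h h0 : decision G h -> decision G h0 ->
  info G h = info G h0 -> player G h0 = p -> player G h = p /\ own h = own h0.
Proof.
move=> Hd Hd0 Ei Ph0.
have Ph : player G h = p.
  by rewrite -(wf_decision_info Hwf Hd).1 Ei (wf_decision_info Hwf Hd0).1.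
by split => //; rewrite -Ph; case: Hwf => _ [_ [_]]; apply.
Qed.

Lemma own_seq_nth_node z i J b : z \in terminals G -> (i < size (own z))%N ->
  nth (0%N, 0%N) (own z) i = (J, b) ->
  exists2 h, prefix (rcons h b) z & [/\ h \in nodes G, decision G h,
    player G h = p, own h = take i (own z) & info G h = J].
Proof.
move=> /mem_terminals[Hv Hsz] Hi.
have [k [Hk Pk Ok ->]] := own_seq_nth Hi; case=> <- <-.
exists (take k z); first by rewrite -take_nth ?prefix_take.
split => //; last by apply: decision_take; rewrite // Pk.
by apply/mem_nodes; split; [exact: valid_take | rewrite size_take_min; lia].
Qed.

Lemma count_infoset_prefix h0 b z : decision G h0 -> player G h0 = p ->
  z \in terminals G ->
  count (fun h => decision G h && (info G h == info G h0) && prefix (rcons h b) z)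
    (nodes G) = prefix (rcons (own h0) (info G h0, b)) (own z).
Proof.
move=> Hd0 Ph0 Hz.
have Hrec h : decision G h -> info G h == info G h0 -> player G h = p /\ own h = own h0.
  by move=> Hd /eqP Ei; apply: infoset_own_seq.
case Hpre: (prefix _ (own z)).
  move: Hpre; rewrite (prefix_rconsE _ _ _ (0%N, 0%N)) => /and3P[HL Hlt /eqP Ee].
  have [h Hhz [Hh Hd Ph Oh Ih]] := own_seq_nth_node Hz Hlt Ee.
  move: HL; rewrite prefixE -Oh => /eqP Oh0.
  rewrite (@eq_in_count _ _ (pred1 h)) ?count_uniq_mem ?uniq_nodes ?Hh // => h' _ /=.
  apply/idP/eqP => [/andP[/andP[Hd' Hi'] Hpz]|->]; last by rewrite Hd Ih eqxx Hhz.
  have [Ph' Oh'] := Hrec h' Hd' Hi'.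
  apply: (@prefix_own_seq_inj _ G p _ _ z) => //; last by rewrite Oh' Oh0.
  - by move: Hpz; rewrite -cats1 => /catl_prefix.
  - by move: Hhz; rewrite -cats1 => /catl_prefix.
rewrite (@eq_in_count _ _ pred0) ?count_pred0 // => h _ /=.
apply/negP => /andP[/andP[Hd Hi] /(own_seq_prefix G p)].
have [Ph Oh] := Hrec h Hd Hi.
by rewrite own_seq_rcons Ph plr_eqb_refl Oh (eqP Hi) cats1 Hpre.
Qed.

Lemma cfvI_seq_value sp h0 b : decision G h0 -> player G h0 = p ->
  cfvI G (with_player p sp so) (info G h0) b =
  seq_value sp (rcons (own h0) (info G h0, b)).
Proof.
move=> Hd0 Ph0.
rewrite /cfvI (wf_decision_info Hwf Hd0).1 Ph0 /cfv.
under eq_bigr => h /andP[Hd /eqP Hi].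
  have [Ph Oh] := infoset_own_seq Hd Hd0 Hi Ph0.
  under eq_bigr => z Hpz.
    rewrite reach_own_from_own_seq // own_seq_rcons Ph plr_eqb_refl Oh size_cat addn1.
    rewrite (reach_opp_with_player _ Hp _ (fun _ _ => 0)) mulrAC.
  over.
over.
rewrite (exchange_big_dep predT) //= /seq_value size_rcons big_mkcond [RHS]big_mkcond.
apply: eq_big_seq => z Hz; rewrite big_const_seq count_infoset_prefix //.
by case: prefix => //=; rewrite addr0.
Qed.

Lemma seq_value_overlong sp L : (depth G < size L)%N -> seq_value sp L = 0.
Proof.
move=> HL; rewrite /seq_value big1_seq // => z /andP[/size_prefix Hpre /mem_terminals[_ Hsz]].
have := leq_trans Hpre (leq_trans (size_own_seq G p z) Hsz).
by rewrite leqNgt HL.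
Qed.

Lemma seq_value_rcons sp L J b :
  sp J b * seq_value sp (rcons L (J, b)) =
  \sum_(z <- terminals G | prefix L (own z) && (size L < size (own z))%N &&
                           (nth (0%N, 0%N) (own z) (size L) == (J, b)))
     seq_weight z * \prod_(e <- drop (size L) (own z)) sp e.1 e.2.
Proof.
rewrite /seq_value mulr_sumr size_rcons; apply: eq_big => [z|z].
  by rewrite (prefix_rconsE _ _ _ (0%N, 0%N)) andbA.
rewrite (prefix_rconsE _ _ _ (0%N, 0%N)) => /and3P[_ Hlt /eqP Ee].
by rewrite (drop_nth (0%N, 0%N) Hlt) big_cons Ee mulrCA.
Qed.

Lemma seq_value_rec sp L : seq_value sp L =
  \sum_(z <- terminals G | own z == L) seq_weight z +
  \sum_(J <- next_infosets L) \sum_(b < na G J)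
     sp J b * seq_value sp (rcons L (J, nat_of_ord b)).
Proof.
rewrite {1}/seq_value (bigID (fun z => size L < size (own z))%N) /= addrC.
congr (_ + _).
  rewrite (eq_bigl (fun z => own z == L)) => [|z].
    by apply: eq_bigr => z /eqP ->; rewrite drop_size big_nil mulr1.
  rewrite -leqNgt prefixE; apply/andP/eqP => [[/eqP E Hs]|->]; last by rewrite take_size.
  by rewrite -E take_oversize.
under [RHS]eq_bigr do under eq_bigr do rewrite seq_value_rcons.
rewrite sum_partition_pairs ?undup_uniq // => z Hz /andP[HL Hlt].
have [h Hhz [Hh Hd Ph Oh Ih]] := own_seq_nth_node Hz Hlt (surjective_pairing _).
have [Hv _] := mem_terminals Hz.
split; last by rewrite -Ih (wf_decision_info Hwf Hd).2 (valid_prefix_rcons Hv Hhz).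
by rewrite -Ih mem_undup map_f // mem_filter Hh Hd Ph plr_eqb_refl Oh -prefixE HL.
Qed.

Lemma seq_value_mono (old new : strat R) :
  (forall J b, 0 <= new J b) ->
  (forall h, decision G h -> player G h = p ->
     \sum_(b < na G (info G h))
        old (info G h) b * cfvI G (with_player p old so) (info G h) b <=
     \sum_(b < na G (info G h))
        new (info G h) b * cfvI G (with_player p old so) (info G h) b) ->
  forall L, seq_value old L <= seq_value new L.
Proof.
move=> Hnew Hloc.
suff H n L : (depth G < size L + n)%N -> seq_value old L <= seq_value new L.
  by move=> L; apply: (H (depth G).+1); lia.
elim: n L => [|n IH] L HL; first by rewrite !seq_value_overlong //; lia.
rewrite !seq_value_rec lerD2l big_seq [X in _ <= X]big_seq.
apply: ler_sum => J /next_infosetsP[h [Hd Ph Oh <-]].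
have Ecfv b : cfvI G (with_player p old so) (info G h) b =
              seq_value old (rcons L (info G h, b)).
  by rewrite cfvI_seq_value // Oh.
apply: le_trans (_ : \sum_(b < na G (info G h))
    new (info G h) b * seq_value old (rcons L (info G h, nat_of_ord b)) <= _).
  have := Hloc h Hd Ph.
  by under eq_bigr do rewrite Ecfv; under [X in _ <= X]eq_bigr do rewrite Ecfv.
apply: ler_sum => b _; apply: ler_wpM2l => //; apply: IH; rewrite size_rcons; lia.
Qed.

End SequenceFormValue.

Section AlternatingUpdates.
Variables (R : realFieldType) (G : game R) (plus : bool).

Lemma sigmaS_update t p : p <> Chance ->
  exists r, sigma G plus t p = strat_of G r /\
    sigma G plus t.+1 p = strat_of G
      (update G plus p r (with_player p (sigma G plus t p) (opp_strat G plus t p))).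
Proof. by case: p => // _; eexists. Qed.

Lemma update_improves p r s J : owner G J = p ->
  \sum_(b < na G J) strat_of G r J b * cfvI G s J b <=
  \sum_(b < na G J) strat_of G (update G plus p r s) J b * cfvI G s J b.
Proof. by move=> HoJ; rewrite /strat_of /update HoJ plr_eqb_refl /=; apply: rm_update_ge. Qed.

End AlternatingUpdates.

Theorem lemma3 (R : realFieldType) (G : game R) (plus : bool) (t : nat)
  (p : plr) (I a : nat) :
  wf_game G -> p <> Chance -> is_infoset G I -> owner G I = p ->
  (a < na G I)%N ->
  cfvI G (with_player p (sigma G plus t p) (opp_strat G plus t p)) I a <=
  cfvI G (with_player p (sigma G plus t.+1 p) (opp_strat G plus t p)) I a.
Proof.
move=> Hwf Hp [h0 [Hd0 <-]] HoI _.
have Ph0 : player G h0 = p by rewrite -(wf_decision_info Hwf Hd0).1.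
have [r [Et Et1]] := sigmaS_update G plus t Hp.
rewrite Et1 Et !(cfvI_seq_value _ Hwf Hp) //.
apply: seq_value_mono => // [J b|h Hd Ph]; first exact: rm_ge0.
by apply: update_improves; rewrite (wf_decision_info Hwf Hd).1.
Qed.
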